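(* Let $R$ be a left coherent ring and let $\kappa\geq |R|$ be an infinite cardinal. Let $\mathcal{U}$ be a set of isomorphism representatives for the class of all FP-injective left $R$-modules $A$ with $|A|\leq\kappa$. Let $f\colon A\to B$ be a homomorphism between FP-injective left $R$-modules such that $f_*\colon \mathrm{Hom}_R(U,A)\to\mathrm{Hom}_R(U,B)$ is surjective for every $U\in\mathcal{U}$. Then $f$ is surjective and $\ker f$ is FP-injective. (That is, $\mathcal{U}$ is a set of admissible generators for the full subcategory of FP-injective modules with its inherited exact structure.)
   Context: A left $R$-module $M$ is FP-injective (absolutely pure) if $\mathrm{Ext}^1_R(F,M)=0$ for every finitely presented left $R$-module $F$. A ring is left coherent if every finitely generated left ideal is finitely presented. *)

From HB Require Import structures.
From mathcomp Require Import all_boot all_order all_algebra.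
Set Implicit Arguments. Unset Strict Implicit. Unset Printing Implicit Defensive.
Import GRing.Theory.
Local Open Scope ring_scope.

(* Left R-modules are [lmodType R] (scalars act on the left); homomorphisms are
   [{linear M -> N}]. The free left module R^n is ['rV[R]_n]; the left regular
   module R is [R^o]. *)

Definition lsurj (T U : Type) (f : T -> U) := forall u, exists t, f t = u.

Definition fin_pres (R : pzRingType) (M : lmodType R) : Prop :=
  exists (n m : nat) (p : {linear 'rV[R]_n -> M}) (g : {linear 'rV[R]_m -> 'rV[R]_n}),
    lsurj p /\ (forall v, p v = 0 <-> exists w, v = g w).

(* Ext^1_R(F, M) = 0, in its Yoneda description: every short exact sequence
   0 -> M -> E -> F -> 0 of left R-modules splits. *)
Definition ext1_vanishes (R : pzRingType) (F M : lmodType R) : Prop :=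
  forall (E : lmodType R) (i : {linear M -> E}) (p : {linear E -> F}),
    injective i -> lsurj p -> (forall e, p e = 0 <-> exists x, e = i x) ->
    exists r : {linear E -> M}, forall x, r (i x) = x.

Definition FP_injective (R : pzRingType) (M : lmodType R) : Prop :=
  forall F : lmodType R, fin_pres F -> ext1_vanishes F M.

(* Left ideals of R are the submodules of the regular left module R^o.
   A finitely generated left ideal is the image of some R^n -> R; it is
   finitely presented if it admits a surjection from some R^n' whose kernel
   is finitely generated. *)
Definition left_coherent (R : pzRingType) : Prop :=
  forall (n : nat) (q : {linear 'rV[R]_n -> R^o}),
    exists (n' m : nat) (p : {linear 'rV[R]_n' -> R^o})
           (g : {linear 'rV[R]_m -> 'rV[R]_n'}),
      (forall x : R, (exists v, p v = x) <-> (exists v, q v = x)) /\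
      (forall v, p v = 0 <-> exists w, v = g w).

(* Cardinal comparisons, with cardinals represented by types. *)
Definition card_le (T U : Type) : Prop := exists f : T -> U, injective f.
Definition infinite_type (T : Type) : Prop := card_le nat T.

Definition lmod_iso (R : pzRingType) (M N : lmodType R) : Prop :=
  exists f : {linear M -> N}, bijective f.

From HB Require Import structures.
From mathcomp Require Import all_boot all_order all_algebra.
From mathcomp Require Import boolp classical_sets.
From Stdlib Require List.
Set Implicit Arguments. Unset Strict Implicit. Unset Printing Implicit Defensive.
Import GRing.Theory.

(* An element of B, or the image of a map from a finitely presented module
   into B, lies in the pure closure of finitely many elements of B: the
   submodule obtained by adjoining, recursively, a chosen solution of every
   finite linear system with constants in it that is solvable in B.  As a pure
   submodule of the FP-injective module B it is FP-injective, and its elements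
   are named by finite terms over nat and R, so by Hessenberg's theorem it has
   at most kappa elements.  Hence it is isomorphic to a member of the family,
   and its inclusion into B lifts along f; for the pure closure of b this gives
   surjectivity.  For the kernel K and an exact 0 -> K -> E -> F -> 0 with F
   finitely presented, extend K -> A over E (A is FP-injective) and lift the
   induced map F -> B to A through a pure closure: the difference of the two
   resulting maps E -> A lands in K and retracts K -> E. *)

(** * Cardinal arithmetic *)

Local Open Scope classical_set_scope.

Lemma bigcup_chain2 (X : Type) (F : set (set X)) p q : total_on F subset ->
  (\bigcup_(G in F) G) p -> (\bigcup_(G in F) G) q -> exists2 G, F G & G p /\ G q.
Proof.
move=> Ftot [G1 FG1 G1p] [G2 FG2 G2q].
by have [/(_ _ G1p)|/(_ _ G2q)] := Ftot _ _ FG1 FG2; [exists G2|exists G1].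
Qed.

Section Comparability.
Variables (T : Type) (t0 : T).

Definition inj_on (A : set T) (f : T -> T) :=
  forall x y, A x -> A y -> f x = f y -> x = y.

Definition inj_into (A B : set T) :=
  exists2 f : T -> T, (forall x, A x -> B (f x)) & inj_on A f.

Lemma graph_inj_into (A B : set T) (G : set (T * T)) :
  (forall x y, G (x, y) -> B y) -> (forall x x' y, G (x, y) -> G (x', y) -> x = x') ->
  (forall x, A x -> exists y, G (x, y)) -> inj_into A B.
Proof.
move=> GB Ginj Gtot.
have /choice[f fG] : forall x, exists y, A x -> G (x, y).
  move=> x; have [/Gtot[y Gxy]|nAx] := pselect (A x); first by exists y.
  by exists t0.
by exists f => [x /fG/GB|x x' /fG Gx /fG + fxx']; rewrite // -fxx' => /(Ginj _ _ _ Gx).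
Qed.

Lemma inj_into_total (A B : set T) : inj_into A B \/ inj_into B A.
Proof.
pose partial_inj (G : set (T * T)) := [/\ forall x y, G (x, y) -> A x /\ B y,
  forall x y y', G (x, y) -> G (x, y') -> y = y' &
  forall x x' y, G (x, y) -> G (x', y) -> x = x'].
have [G [[GAB Gfun Ginj] Gmax]] : exists G, partial_inj G /\
    forall G', G `<` G' -> ~ partial_inj G'.
  apply: Zorn_bigcup => F Fpinj Ftot; split.
  - by move=> x y [G /Fpinj[GAB _ _] /GAB].
  - move=> x y y' Gx Gx'; have [G /Fpinj[_ Gfun _] []] := bigcup_chain2 Ftot Gx Gx'.
    exact: Gfun.
  - move=> x x' y Gx Gx'; have [G /Fpinj[_ _ Ginj] []] := bigcup_chain2 Ftot Gx Gx'.
    exact: Ginj.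
have [Adom|/existsNP[x0 /not_implyP[Ax0 x0G]]] :=
  pselect (forall x, A x -> exists y, G (x, y)).
  by left; apply: (graph_inj_into (G := G) _ Ginj Adom) => x y /GAB[].
have [Bran|/existsNP[y0 /not_implyP[By0 y0G]]] :=
  pselect (forall y, B y -> exists x, G (x, y)).
  right; apply: (graph_inj_into (G := [set p | G (p.2, p.1)])).
  - by move=> y x /GAB[].
  - by move=> y y' x; exact: Gfun.
  - by move=> y /Bran[x]; exists x.
exfalso; apply: (Gmax (G `|` [set (x0, y0)])).
  split; first exact: subsetUl.
  by move=> /(_ (x0, y0) (or_intror erefl)) Gx0; apply: x0G; exists y0.
split.
- by move=> x y [/GAB//|[-> ->]].
- move=> x y y' [G1|[? ?]] [G2|[? ?]]; subst => //; first exact: Gfun G1 G2.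
  + by case: x0G; exists y.
  + by case: x0G; exists y'.
- move=> x x' y [G1|[? ?]] [G2|[? ?]]; subst => //; first exact: Ginj G1 G2.
  + by case: y0G; exists x.
  + by case: y0G; exists x'.
Qed.

End Comparability.

Section Hessenberg.
Variables (T : Type) (iota : nat -> T).
Hypothesis iota_inj : injective iota.

Definition pairing_on (D : set T) (pr : T -> T -> T) :=
  (forall a b, D a -> D b -> D (pr a b)) /\
  forall a b a' b', D a -> D b -> D a' -> D b' -> pr a b = pr a' b' -> a = a' /\ b = b'.

Definition gdom (G : set ((T * T) * T)) : set T := [set x | exists c, G ((x, x), c)].

(* [G] is the graph of an injection [gdom G * gdom G -> gdom G]; reading the
   domain off the diagonal makes unions of chains of such graphs again such
   graphs.  The empty graph, union of the empty chain, is the only one not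
   required to contain [range iota]. *)
Definition pairing_graph (G : set ((T * T) * T)) :=
  [/\ forall a b c, G ((a, b), c) -> [/\ gdom G a, gdom G b & gdom G c],
      forall a b, gdom G a -> gdom G b -> exists c, G ((a, b), c),
      forall p c c', G (p, c) -> G (p, c') -> c = c',
      forall p p' c, G (p, c) -> G (p', c) -> p = p' &
      G !=set0 -> range iota `<=` gdom G].

Lemma gdomS G G' : G `<=` G' -> gdom G `<=` gdom G'.
Proof. by move=> GG' x [c /GG' Gc]; exists c. Qed.

Lemma pairing_graph_chain F : F `<=` pairing_graph -> total_on F subset ->
  pairing_graph (\bigcup_(G in F) G).
Proof.
move=> Fpair Ftot.
have sub G : F G -> G `<=` \bigcup_(G in F) G by move=> FG e Ge; exists G.
split.
- move=> a b c [G FG Gabc]; have [Gin _ _ _ _] := Fpair _ FG.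
  have GU := gdomS (sub _ FG).
  by have [Ga Gb Gc] := Gin _ _ _ Gabc; split; apply: GU.
- move=> a b [ca Ga] [cb Gb]; have [G FG [Gaa Gbb]] := bigcup_chain2 Ftot Ga Gb.
  have [_ Gtot _ _ _] := Fpair _ FG.
  by have [c Gc] := Gtot a b (ex_intro _ _ Gaa) (ex_intro _ _ Gbb); exists c; exists G.
- move=> p c c' Gc Gc'; have [G /Fpair[_ _ Gfun _ _] []] := bigcup_chain2 Ftot Gc Gc'.
  exact: Gfun.
- move=> p p' c Gp Gp'; have [G /Fpair[_ _ _ Ginj _] []] := bigcup_chain2 Ftot Gp Gp'.
  exact: Ginj.
- move=> [e [G FG Ge]]; have [_ _ _ _ Gnat] := Fpair _ FG.
  exact: subset_trans (Gnat (ex_intro _ _ Ge)) (gdomS (sub _ FG)).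
Qed.

Lemma pairing_graph_nat :
  pairing_graph [set ((iota nm.1, iota nm.2), iota (pickle nm)) | nm in [set: nat * nat]].
Proof.
set G0 := [set _ | _ in _].
have G0dom : gdom G0 = range iota.
  apply/seteqP; split=> [x [c [[n m] _ [<- _ _]]]|_ [n _ <-]]; first by exists n.
  by exists (iota (pickle (n, n))); exists (n, n).
rewrite /pairing_graph G0dom; split.
- by move=> a b c [[n m] _ [<- <- <-]]; split; eexists.
- by move=> _ _ [n _ <-] [m _ <-]; eexists; exists (n, m).
- move=> p c c' [[n m] _ [<- <-]] [[n' m'] _ [/iota_inj En /iota_inj Em <-]].
  by rewrite En Em.
- move=> p p' c [nm _ [<- <-]] [nm' _ [<- /iota_inj/(pcan_inj pickleK)->]].
  by case: nm'.
- by move=> _ x.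
Qed.

Lemma pairing_graph_fun G : pairing_graph G -> exists pr, pairing_on (gdom G) pr.
Proof.
move=> [Gdom Gtot _ Ginj _].
have /choice[f fG] : forall ab : T * T, exists c, gdom G ab.1 -> gdom G ab.2 -> G (ab, c).
  move=> [a b]; have [Da|nDa] := pselect (gdom G a); last by exists (iota 0) => /nDa.
  have [Db|nDb] := pselect (gdom G b); last by exists (iota 0) => _ /nDb.
  by have [c Gc] := Gtot a b Da Db; exists c.
exists (fun a b => f (a, b)); split=> [a b Da Db|a b a' b' Da Db Da' Db' E].
  by have [] := Gdom _ _ _ (fG (a, b) Da Db).
have := Ginj _ _ _ (fG (a, b) Da Db).
by rewrite E => /(_ _ (fG (a', b') Da' Db')) [-> ->].
Qed.

Definition fresh_pair (D W : set T) a b := [/\ W a, W b & ~ (D a /\ D b)].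

Definition fresh_injection (D W : set T) (h : T -> T -> T) :=
  (forall a b, fresh_pair D W a b -> W (h a b) /\ ~ D (h a b)) /\
  forall a b a' b', fresh_pair D W a b -> fresh_pair D W a' b' ->
    h a b = h a' b' -> a = a' /\ b = b'.

Lemma pairing_graph_union G (W : set T) (h : T -> T -> T) :
  pairing_graph G -> range iota `<=` gdom G -> gdom G `<=` W ->
  fresh_injection (gdom G) W h ->
  pairing_graph (G `|` [set e | fresh_pair (gdom G) W e.1.1 e.1.2 /\ e.2 = h e.1.1 e.1.2]).
Proof.
move=> [Gdom Gtot Gfun Ginj _] Gnat GW [h_fresh h_inj].
set G' := _ `|` _.
have G'dom : gdom G' = W.
  apply/seteqP; split=> [x [c [/Gdom[Dx _ _]|[[]]]]|x Wx] //; first exact: GW.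
  have [Dx|nDx] := pselect (gdom G x); first by apply: gdomS Dx => e; left.
  by exists (h x x); right; split=> //; split=> // -[].
rewrite /pairing_graph G'dom; split.
- move=> a b c [/Gdom[Da Db Dc]|[fab /= ->]]; first by split; apply: GW.
  by have [Wa Wb _] := fab; have [] := h_fresh _ _ fab.
- move=> a b Wa Wb; have [[Da Db]|nD] := pselect (gdom G a /\ gdom G b).
    by have [c Gc] := Gtot _ _ Da Db; exists c; left.
  by exists (h a b); right.
- move=> [a b] c c' [Gc|[fab /= ->]] [Gc'|[fab' /= ->]] //; first exact: Gfun Gc Gc'.
  + by have [Da Db _] := Gdom _ _ _ Gc; case: fab' => _ _ [].
  + by have [Da Db _] := Gdom _ _ _ Gc'; case: fab => _ _ [].
- move=> [a b] [a' b'] c [Gc|[fab /= ->]] [Gc'|[fab' /= Ec]].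
  + exact: Ginj Gc Gc'.
  + by have [_ _ Dc] := Gdom _ _ _ Gc; case: (h_fresh _ _ fab'); rewrite -Ec.
  + by have [_ _ Dc] := Gdom _ _ _ Gc'; case: (h_fresh _ _ fab).
  + by have /= [-> ->] := h_inj _ _ _ _ fab fab' Ec.
- by move=> _; apply: subset_trans GW.
Qed.

(* A pair off [D * D] goes to [j (pr (pr tag (t a)) (t b))], where [t] pulls
   [j @` D] back to [D] and [tag] records which coordinates lie outside [D]. *)
Lemma fresh_injection_exists (D : set T) pr j :
  range iota `<=` D -> pairing_on D pr ->
  (forall x, D x -> ~ D (j x)) -> inj_on D j ->
  exists h, fresh_injection D (D `|` j @` D) h.
Proof.
move=> Dnat [prD prI] jD jI; set W := _ `|` _.
have natD n : D (iota n) by apply: Dnat; exists n.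
have /choice[jinv jinvP] : forall x, exists y, (j @` D) x -> D y /\ j y = x.
  move=> x; have [[y Dy <-]|njx] := pselect ((j @` D) x); last by exists (iota 0) => /njx.
  by exists y.
pose t x := if pselect (D x) is left _ then x else jinv x.
pose tag a b := iota (if pselect (D a) is left _ then 0
                      else if pselect (D b) is left _ then 1 else 2).
have tD x : W x -> D (t x).
  by rewrite /t; case: pselect => // nDx [//|jx]; exact: (jinvP _ jx).1.
have tI x y : W x -> W y -> (D x <-> D y) -> t x = t y -> x = y.
  rewrite /t => Wx Wy [Dxy Dyx].
  case: pselect => [Dx|nDx]; case: pselect => [Dy|nDy] //.
  - by case: nDy; exact: Dxy.
  - by case: nDx; exact: Dyx.
  case: Wx => // jx; case: Wy => // jy Exy.
  by rewrite -(jinvP _ jx).2 -(jinvP _ jy).2 Exy.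
have tagI a b a' b' : fresh_pair D W a b -> fresh_pair D W a' b' ->
    tag a b = tag a' b' -> (D a <-> D a') /\ (D b <-> D b').
  move=> [_ _ nDab] [_ _ nDab'] /iota_inj.
  case: (pselect (D a)) => Da; case: (pselect (D b)) => Db;
  by case: (pselect (D a')) => Da'; case: (pselect (D b')) => Db' //=; tauto.
have tagD a b : D (tag a b) by exact: natD.
have hD a b : W a -> W b -> D (pr (pr (tag a b) (t a)) (t b)).
  by move=> Wa Wb; exact: prD _ _ (prD _ _ (tagD a b) (tD _ Wa)) (tD _ Wb).
exists (fun a b => j (pr (pr (tag a b) (t a)) (t b))); split.
  move=> a b [Wa Wb _]; split; last exact/jD/hD.
  by right; exists (pr (pr (tag a b) (t a)) (t b)); first exact: hD.
move=> a b a' b' fab fab'; have [Wa Wb _] := fab; have [Wa' Wb' _] := fab'.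
move=> /(jI _ _ (hD _ _ Wa Wb) (hD _ _ Wa' Wb')).
move=> /(prI _ _ _ _ (prD _ _ (tagD a b) (tD _ Wa)) (tD _ Wb)
                    (prD _ _ (tagD a' b') (tD _ Wa')) (tD _ Wb'))[].
move=> /(prI _ _ _ _ (tagD a b) (tD _ Wa) (tagD a' b') (tD _ Wa'))[Etag Eta] Etb.
have [Da Db] := tagI _ _ _ _ fab fab' Etag.
by rewrite (tI _ _ Wa Wa' Da Eta) (tI _ _ Wb Wb' Db Etb).
Qed.

Lemma pairing_graph_extend G : pairing_graph G -> range iota `<=` gdom G ->
  inj_into (gdom G) (~` gdom G) -> exists2 G', G `<` G' & pairing_graph G'.
Proof.
move=> Gpair Gnat [j jD jI]; have [pr prP] := pairing_graph_fun Gpair.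
have [h hP] := fresh_injection_exists Gnat prP jD jI.
exists (G `|` [set e | fresh_pair (gdom G) (gdom G `|` j @` gdom G) e.1.1 e.1.2 /\
                        e.2 = h e.1.1 e.1.2]); last first.
  by apply: pairing_graph_union => //; exact: subsetUl.
split; first exact: subsetUl.
have [Gdom _ _ _ _] := Gpair; pose z := j (iota 0).
have nDz : ~ gdom G z by apply: jD; apply: Gnat; exists 0.
have fz : fresh_pair (gdom G) (gdom G `|` j @` gdom G) z z.
  by split=> [||[]//]; right; exists (iota 0) => //; apply: Gnat; exists 0.
by move=> /(_ ((z, z), h z z) (or_intror (conj fz erefl)))/Gdom[/nDz].
Qed.

Theorem hessenberg : card_le (T * T) T.
Proof.
have [G [Gpair Gmax]] := Zorn_bigcup pairing_graph_chain.
have Gnat : range iota `<=` gdom G.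
  have [_ _ _ _ GN] := Gpair; have [/GN//|nG] := pselect (G !=set0).
  exfalso; apply: Gmax pairing_graph_nat; split=> [e Ge|]; first by case: nG; exists e.
  move=> /(_ ((iota 0, iota 0), iota (pickle (0, 0)))) G0G.
  by apply: nG; eexists; apply: G0G; exists (0, 0).
have natD n : gdom G (iota n) by apply: Gnat; exists n.
have [pr [prD prI]] := pairing_graph_fun Gpair.
have [Dext|[g gD gI]] := inj_into_total (iota 0) (gdom G) (~` gdom G).
  by have [G' /Gmax] := pairing_graph_extend Gpair Gnat Dext.
pose emb x := if pselect (gdom G x) is left _ then pr x (iota 0) else pr (g x) (iota 1).
have embD x : gdom G (emb x).
  rewrite /emb; case: pselect => [Dx|nDx]; first exact: prD _ _ Dx (natD 0).
  exact: prD _ _ (gD _ nDx) (natD 1).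
have embI : injective emb.
  move=> x y; rewrite /emb; case: pselect => [Dx|nDx]; case: pselect => [Dy|nDy].
  - by case/(prI _ _ _ _ Dx (natD 0) Dy (natD 0)).
  - by case/(prI _ _ _ _ Dx (natD 0) (gD _ nDy) (natD 1)) => _ /iota_inj.
  - by case/(prI _ _ _ _ (gD _ nDx) (natD 1) Dy (natD 0)) => _ /iota_inj.
  - by case/(prI _ _ _ _ (gD _ nDx) (natD 1) (gD _ nDy) (natD 1)) => /gI->.
exists (fun xy => pr (emb xy.1) (emb xy.2)) => -[x y] [x' y'] /=.
by case/(prI _ _ _ _ (embD x) (embD y) (embD x') (embD y')) => /embI-> /embI->.
Qed.

End Hessenberg.

Local Close Scope classical_set_scope.

(** * Linear maps, submodules and cokernels *)

Local Open Scope ring_scope.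
Local Open Scope quotient_scope.

Section LinearOf.
Variables (R : pzRingType) (U V : lmodType R) (f : U -> V).
Definition linear_of of linear f := f.
Variable fL : linear f.
HB.instance Definition _ := GRing.isLinear.Build R U V *:%R (linear_of fL) fL.
End LinearOf.

Section Factorization.
Variable R : pzRingType.
Implicit Types U V W K : lmodType R.

Lemma linear_factor_inj U V W (i : {linear U -> V}) (h : {linear W -> V}) :
  injective i -> (forall w, exists u, h w = i u) ->
  exists h' : {linear W -> U}, forall w, i (h' w) = h w.
Proof.
move=> iI /choice[h' hh'].
have h'L : linear h' by move=> a x y; apply: iI; rewrite linearP -!hh' linearP.
by exists (linear_of h'L) => w; rewrite -hh'.
Qed.

Lemma linear_factor_surj U V W (p : {linear U -> V}) (h : {linear U -> W}) :
  lsurj p -> (forall u, p u = 0 -> h u = 0) ->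
  exists h' : {linear V -> W}, forall u, h' (p u) = h u.
Proof.
move=> /choice[s ps] hp.
have hE u u' : p u = p u' -> h u = h u'.
  by move=> E; apply/eqP; rewrite -subr_eq0 -linearB hp // linearB E subrr.
have h'L : linear (h \o s).
  by move=> a x y /=; rewrite -linearP; apply: hE; rewrite linearP !ps.
by exists (linear_of h'L) => u; apply: hE; rewrite ps.
Qed.

Lemma linear_bij_inverse U V (f : {linear U -> V}) :
  bijective f -> exists g : {linear V -> U}, cancel f g.
Proof.
move=> fB; have [g' _ g'K] := fB.
have [g fg] := linear_factor_inj (h := idfun) (bij_inj fB)
  (fun v => ex_intro _ (g' v) (esym (g'K v))).
by exists g => x; apply: (bij_inj fB); rewrite fg.
Qed.

Lemma linear_retraction U V K (i : {linear K -> U}) (j : {linear K -> V})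
    (h : {linear U -> V}) :
  injective j -> (forall u, exists x, h u = j x) -> (forall x, h (i x) = j x) ->
  exists r : {linear U -> K}, forall x, r (i x) = x.
Proof.
move=> jI hj hi; have [r rh] := linear_factor_inj jI hj.
by exists r => x; apply: jI; rewrite rh hi.
Qed.

End Factorization.

Section Submodule.
Variables (R : pzRingType) (V : lmodType R) (S : submodClosed V).

Definition submod := {x : V | x \in S}.
HB.instance Definition _ := SubChoice.copy submod {x : V | x \in S}.
HB.instance Definition _ := [SubChoice_isSubLmodule of submod by <:].

Lemma submodP v : reflect (exists u : submod, v = val u) (v \in S).
Proof.
apply: (iffP idP) => [Sv|[u ->]]; last exact: valP.
by exists (Sub v Sv); rewrite SubK.
Qed.

End Submodule.

Section Cokernel.
Variables (R : pzRingType) (U V : lmodType R) (g : {linear U -> V}).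

Definition linear_image : {pred V} := fun v => `[< exists u, v = g u >].

Lemma linear_imageP v : reflect (exists u, v = g u) (v \in linear_image).
Proof. exact: asboolP. Qed.

Lemma linear_image_closed : submod_closed linear_image.
Proof.
split=> [|a _ _ /linear_imageP[x ->] /linear_imageP[y ->]]; apply/linear_imageP.
  by exists 0; rewrite linear0.
by exists (a *: x + y); rewrite linearP.
Qed.

HB.instance Definition _ := GRing.isSubmodClosed.Build R V linear_image
  (GRing.submod_closed_semi linear_image_closed).

Definition coker := Quotient.quot linear_image.
HB.instance Definition _ := GRing.Zmodule.on coker.
HB.instance Definition _ := Choice.on coker.
HB.instance Definition _ := EqQuotient.on coker.

Lemma coker_eqP x y : reflect (x - y \in linear_image) (\pi_coker x == \pi_coker y).
Proof. by rewrite Quotient.idealrBE; exact: idP. Qed.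

Lemma pi_coker_add x y : \pi_coker (x + y) = \pi_coker x + \pi_coker y.
Proof. by rewrite !piE. Qed.

Definition coker_scale (a : R) := lift_op1 coker ( *:%R a).

Lemma pi_coker_scale a : {morph \pi_coker : x / a *: x >-> coker_scale a x}.
Proof.
move=> x; unlock coker_scale; apply/eqP/coker_eqP.
have /coker_eqP : \pi_coker (repr (\pi_coker x)) == \pi_coker x by rewrite reprK.
move=> /linear_imageP[u Hu]; apply/linear_imageP; exists (- (a *: u)).
by rewrite -scalerBr -opprB Hu linearN linearZ scalerN.
Qed.

Lemma coker_scaleA a b x : coker_scale a (coker_scale b x) = coker_scale (a * b) x.
Proof. by elim/quotW: x => x; rewrite -!pi_coker_scale scalerA. Qed.

Lemma coker_scale1 : left_id 1 coker_scale.
Proof. by elim/quotW => x; rewrite -pi_coker_scale scale1r. Qed.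

Lemma coker_scaleDr : right_distributive coker_scale +%R.
Proof.
move=> a; elim/quotW => x; elim/quotW => y.
by rewrite -pi_coker_add -!pi_coker_scale scalerDr pi_coker_add.
Qed.

Lemma coker_scaleDl x : {morph coker_scale^~ x : a b / a + b}.
Proof.
by elim/quotW: x => x a b; rewrite -!pi_coker_scale scalerDl pi_coker_add.
Qed.

HB.instance Definition _ := GRing.Zmodule_isLmodule.Build R coker
  coker_scaleA coker_scale1 coker_scaleDr coker_scaleDl.

Definition coker_proj : V -> coker := \pi.

Lemma coker_proj_is_linear : linear coker_proj.
Proof. by move=> a x y; rewrite /coker_proj pi_coker_add pi_coker_scale. Qed.

HB.instance Definition _ := GRing.isLinear.Build R V coker *:%R coker_proj
  coker_proj_is_linear.

Lemma coker_proj_surj : lsurj coker_proj.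
Proof. by move=> x; exists (repr x); rewrite /coker_proj reprK. Qed.

Lemma coker_proj_eq0 v : coker_proj v = 0 <-> exists u, v = g u.
Proof.
rewrite -(linear0 coker_proj); split=> [/eqP/coker_eqP|v_im].
  by rewrite subr0 => /linear_imageP.
by apply/eqP/coker_eqP; rewrite subr0; apply/linear_imageP.
Qed.

End Cokernel.

Section ProductMaps.
Variables (R : pzRingType) (K U V : lmodType R).

Definition inl_lin (u : U) : U * V := (u, 0).
Definition inr_lin (v : V) : U * V := (0, v).
Definition fst_lin (w : U * V) : U := w.1.
Definition pair_lin (f : K -> U) (g : K -> V) (x : K) : U * V := (f x, g x).

Lemma inl_lin_is_linear : linear inl_lin.
Proof. by move=> a x y; rewrite -[RHS]/(_, a *: 0 + 0) scaler0 addr0. Qed.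

Lemma inr_lin_is_linear : linear inr_lin.
Proof. by move=> a x y; rewrite -[RHS]/(a *: 0 + 0, _) scaler0 addr0. Qed.

Lemma fst_lin_is_linear : linear fst_lin. Proof. by []. Qed.

Lemma pair_lin_is_linear (f : {linear K -> U}) (g : {linear K -> V}) :
  linear (pair_lin f g).
Proof. by move=> a x y; rewrite /pair_lin !linearP. Qed.

HB.instance Definition _ := GRing.isLinear.Build R U (U * V)%type *:%R inl_lin
  inl_lin_is_linear.
HB.instance Definition _ := GRing.isLinear.Build R V (U * V)%type *:%R inr_lin
  inr_lin_is_linear.
HB.instance Definition _ := GRing.isLinear.Build R (U * V)%type U *:%R fst_lin
  fst_lin_is_linear.
HB.instance Definition _ (f : {linear K -> U}) (g : {linear K -> V}) :=
  GRing.isLinear.Build R K (U * V)%type *:%R (pair_lin f g) (pair_lin_is_linear f g).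

End ProductMaps.

Section RowCombination.
Variables (R : pzRingType) (V : lmodType R) (n : nat) (z : 'I_n -> V).

Definition rowcomb (v : 'rV[R]_n) : V := \sum_t v 0 t *: z t.

Lemma rowcomb_is_linear : linear rowcomb.
Proof.
move=> a v w; rewrite /rowcomb scaler_sumr -big_split; apply: eq_bigr => t _.
by rewrite !mxE scalerDl scalerA.
Qed.

HB.instance Definition _ := GRing.isLinear.Build R 'rV[R]_n V *:%R rowcomb
  rowcomb_is_linear.

End RowCombination.

Lemma eq_rowcomb (R : pzRingType) (V : lmodType R) n (z z' : 'I_n -> V) :
  z =1 z' -> rowcomb z =1 rowcomb z'.
Proof. by move=> zz' v; apply: eq_bigr => t _; rewrite zz'. Qed.

Lemma linear_rowcomb (R : pzRingType) (V : lmodType R) n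
    (f : {linear 'rV[R]_n -> V}) v :
  f v = rowcomb (fun t => f 'e_t) v.
Proof.
by rewrite {1}[v]row_sum_delta linear_sum; apply: eq_bigr => t _; rewrite linearZ.
Qed.

Lemma rowcomb_map (R : pzRingType) (V W : lmodType R) n (f : {linear V -> W})
    (z : 'I_n -> V) v :
  f (rowcomb z v) = rowcomb (f \o z) v.
Proof. by rewrite linear_sum; apply: eq_bigr => t _; rewrite linearZ. Qed.

(** * FP-injective modules *)

Definition short_exact (R : pzRingType) (K E F : lmodType R)
    (i : {linear K -> E}) (p : {linear E -> F}) :=
  [/\ injective i, lsurj p & forall e, p e = 0 <-> exists x, e = i x].

Section Extension.
Variables (R : pzRingType) (A K E F : lmodType R).
Variables (i : {linear K -> E}) (p : {linear E -> F}) (k : {linear K -> A}).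

Lemma FP_injective_extend :
  FP_injective A -> fin_pres F -> short_exact i p ->
  exists k' : {linear E -> A}, forall x, k' (i x) = k x.
Proof.
move=> HA Ffp [iI pS pK].
pose d : {linear K -> (E * A)%type} := pair_lin i (\- k).
(* [pi] is the projection onto the pushout of [i] and [k]; [j] and [q] sit in
   the short exact sequence 0 -> A -> pushout -> F -> 0, which splits. *)
pose pi := coker_proj d; pose j := pi \o @inr_lin _ E A.
have pi_shift x a : pi (i x, a) = j (a + k x).
  apply/eqP; rewrite -subr_eq0 -linearB; apply/eqP/coker_proj_eq0.
  exists x; rewrite -[LHS]/(i x - 0, a - (a + k x)).
  by rewrite subr0 opprD addrA subrr add0r.
have jI : injective j.
  apply: raddf_inj => a /coker_proj_eq0[x [/esym ix ->]].
  by move: ix; rewrite -(linear0 i) => /iI ->; rewrite /= linear0 oppr0.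
have [q qE] := linear_factor_surj (h := p \o @fst_lin _ E A) (coker_proj_surj (g := d))
  (fun v (v0 : pi v = 0) => ltac:(case/coker_proj_eq0: v0 => x ->; apply/pK; exists x; done)).
have qS : lsurj q by move=> f; have [e <-] := pS f; exists (pi (e, 0)); rewrite qE.
have qK v : q v = 0 <-> exists a, v = j a.
  split; last by move=> [a ->]; rewrite qE /= linear0.
  have [[e a] <-] := coker_proj_surj (g := d) v; rewrite qE /= => /pK[x ->].
  by exists (a + k x); apply: pi_shift.
have [r rj] := HA F Ffp _ j q jI qS qK.
exists (r \o pi \o @inl_lin _ E A) => x /=.
by rewrite /inl_lin -/pi pi_shift add0r rj.
Qed.

End Extension.

Section Splitting.
Variables (R : pzRingType) (K E F : lmodType R).
Variables (i : {linear K -> E}) (p : {linear E -> F}).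
Variables (n m : nat) (p0 : {linear 'rV[R]_n -> F}) (g0 : {linear 'rV[R]_m -> 'rV[R]_n}).
Hypotheses (ipE : short_exact i p) (p0S : lsurj p0).
Hypothesis p0K : forall v, p0 v = 0 <-> exists w, v = g0 w.

Lemma split_of_lift (z : 'I_n -> E) :
  (forall t, p (z t) = p0 'e_t) -> (forall l, rowcomb z (g0 'e_l) = 0) ->
  exists r : {linear E -> K}, forall x, r (i x) = x.
Proof.
move=> zp zg; have [iI _ pK] := ipE.
have [s sE] : exists s : {linear F -> E}, forall v, s (p0 v) = rowcomb z v.
  apply: linear_factor_surj => // _ /p0K[w ->].
  move: (linear_rowcomb (rowcomb z \o g0) w) => /= ->.
  by rewrite {1}/rowcomb big1 // => l _; rewrite zg scaler0.
have ps f : p (s f) = f.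
  have [v <-] := p0S f; rewrite sE rowcomb_map [RHS]linear_rowcomb.
  by apply: eq_bigr => t _; rewrite /= zp.
apply: (linear_retraction (i := i) (j := i) (h := idfun \- (s \o p))) => // [e|x].
  by apply/pK; rewrite /= linearB ps subrr.
rewrite /=; have -> : p (i x) = 0 by apply/pK; exists x.
by rewrite linear0 subr0.
Qed.

End Splitting.

Definition pure_closed (R : pzRingType) (B : lmodType R) (S : {pred B}) :=
  forall m n (M : 'M[R]_(m, n)) (c : 'I_m -> B), (forall l, c l \in S) ->
    (exists x : 'I_n -> B, forall l, \sum_t M l t *: x t = c l) ->
  exists2 y : 'I_n -> B, (forall t, y t \in S) & forall l, \sum_t M l t *: y t = c l.

Lemma pure_closed_submod (R : pzRingType) (B : lmodType R) (S : {pred B}) :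
  pure_closed S -> submod_closed S.
Proof.
move=> Spure.
have SL a x y : x \in S -> y \in S -> a *: x + y \in S.
  move=> Sx Sy; pose M : 'M[R]_2 := \matrix_(l, t)
    if l == 0 then (t == 0)%:R else if t == 0 then - a else 1.
  have [u Su uM] : exists2 u : 'I_2 -> B, (forall t, u t \in S) &
      forall l, \sum_t M l t *: u t = if l == 0 then x else y.
    apply: Spure => [l|]; first by case: ifP.
    exists (fun t => if t == 0 then x else a *: x + y) => l.
    rewrite !big_ord_recl big_ord0 !mxE /= addr0.
    by case: (l == 0); rewrite ?scale1r ?scale0r ?addr0 // scaleNr addKr.
  (* [u 0 = x] and [u 1 - a *: u 0 = y] force [u 1 = a *: x + y]. *)
  have := uM 0; have := uM 1; rewrite !big_ord_recl !big_ord0 !mxE /=.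
  rewrite scale1r scale0r !addr0 => u1 u0.
  by rewrite scale1r in u0; rewrite -u1 u0 scaleNr addNKr.
(* The empty system yields an element of [S], hence [S] is not empty. *)
have [x0 Sx0 _] : exists2 x0 : 'I_1 -> B, (forall t, x0 t \in S) &
    forall l : 'I_0, \sum_t (0 : 'M[R]_(0, 1)) l t *: x0 t = 0.
  by apply: Spure => [[]|] //; exists (fun=> 0) => -[].
split=> [|a x y Sx Sy]; last exact: SL.
by rewrite -(addNr (x0 0)) -scaleN1r SL.
Qed.

Lemma FP_injective_pure_submod (R : pzRingType) (B : lmodType R) (S : submodClosed B) :
  FP_injective B -> pure_closed S -> FP_injective (submod S).
Proof.
move=> HB Spure F Ffp E i p iI pS pK; have ipE : short_exact i p by [].
have [n [m [p0 [g0 [p0S p0K]]]]] := Ffp.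
(* The relations of F evaluated on lifts [e] of its generators lie in [S]; the
   resulting system is solvable in B (through the extension [io] of the
   inclusion), hence in [S] by purity, and a solution [d] corrects the lifts
   into ones satisfying the relations. *)
have /choice[e eP] : forall t, exists x, p x = p0 'e_t by move=> t; exact: pS.
pose M := \matrix_(l, t) g0 'e_l 0 t.
have rowcombM z l : rowcomb z (g0 'e_l) = \sum_t M l t *: z t.
  by apply: eq_bigr => t _; rewrite mxE.
have /choice[c cP] : forall l, exists x, \sum_t M l t *: e t = i x.
  move=> l; apply/pK; rewrite -rowcombM rowcomb_map (eq_rowcomb eP).
  by rewrite -linear_rowcomb; apply/p0K; exists 'e_l.
have [io ioE] := FP_injective_extend val HB Ffp ipE.
have [y yS yM] : exists2 y : 'I_n -> B, (forall t, y t \in S) &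
    forall l, \sum_t M l t *: y t = val (c l).
  apply: Spure => [l|]; first exact: valP.
  exists (io \o e) => l; rewrite -ioE -cP linear_sum.
  by apply: eq_bigr => t _; rewrite linearZ.
have /choice[d dE] : forall t, exists u : submod S, y t = val u.
  by move=> t; apply/submodP.
apply: (split_of_lift ipE p0S p0K (z := fun t => e t - i (d t))) => [t|l].
  by rewrite linearB eP (_ : p (i (d t)) = 0) ?subr0 //; apply/pK; exists (d t).
rewrite rowcombM (eq_bigr (fun t => M l t *: e t - i (M l t *: d t))) => [|t _].
  rewrite sumrB cP -linear_sum (_ : \sum_t M l t *: d t = c l) ?subrr //.
  by apply: val_inj; rewrite -yM linear_sum; apply: eq_bigr => t _; rewrite linearZ dE.
by rewrite linearZ scalerBr.
Qed.

(** * Pure closures *)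

(* [Sol m n j rows cs] denotes the [j]-th unknown of the chosen solution of the
   system with [m] equations in [n] unknowns, coefficient rows [rows] and
   constant terms [cs]. *)
Inductive term (R : Type) :=
| Gen of nat
| Sol of nat & nat & nat & seq (seq R) & seq (term R).
Arguments Gen {R}.

Fixpoint term_ind' (R : Type) (P : term R -> Prop)
    (PGen : forall i, P (Gen i))
    (PSol : forall m n j rows cs, (forall c, List.In c cs -> P c) -> P (Sol m n j rows cs))
    (c : term R) : P c :=
  match c with
  | Gen i => PGen i
  | Sol m n j rows cs => PSol m n j rows cs
      ((fix all_P (cs : seq (term R)) : forall c, List.In c cs -> P c :=
        match cs with
        | [::] => fun _ F => False_ind _ F
        | c' :: cs' => fun c inc =>
            match inc with
            | or_introl E => eq_ind c' P (term_ind' PGen PSol c') c E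
            | or_intror inc' => all_P cs' c inc'
            end
        end) cs)
  end.

Section PureClosure.
Variables (R : pzRingType) (B : lmodType R) (s : seq B).

Definition solve m n (M : 'M[R]_(m, n)) (c : 'I_m -> B) : 'I_n -> B :=
  if pselect (exists x : 'I_n -> B, forall l, \sum_t M l t *: x t = c l)
  is left solvable then proj1_sig (cid solvable) else fun=> 0.

Lemma solveP m n (M : 'M[R]_(m, n)) (c : 'I_m -> B) :
  (exists x : 'I_n -> B, forall l, \sum_t M l t *: x t = c l) ->
  forall l, \sum_t M l t *: solve M c t = c l.
Proof. by rewrite /solve; case: pselect => // solvable _; case: cid. Qed.

Definition matrix_of_rows m n (rows : seq (seq R)) : 'M[R]_(m, n) :=
  \matrix_(l, t) nth 0 (nth [::] rows l) t.

Fixpoint eval (c : term R) : B :=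
  match c with
  | Gen i => nth 0 s i
  | Sol m n j rows cs =>
      if insub j is Some t then
        solve (matrix_of_rows m n rows) (fun l : 'I_m => nth 0 (map eval cs) l) t
      else 0
  end.

Definition pure_closure : {pred B} := fun b => `[< exists c, eval c = b >].

Lemma pure_closureP b : reflect (exists c, eval c = b) (b \in pure_closure).
Proof. exact: asboolP. Qed.

Lemma pure_closure_pure : pure_closed pure_closure.
Proof.
move=> m n M c /(_ _)/pure_closureP-/choice[cd cdE] solvable.
pose rows := [seq [seq M l t | t <- enum 'I_n] | l <- enum 'I_m].
pose cs := [seq cd l | l <- enum 'I_m].
have rowsM : matrix_of_rows m n rows = M.
  apply/matrixP => l t; rewrite mxE (nth_map l) ?size_enum_ord // nth_ord_enum.
  by rewrite (nth_map t) ?size_enum_ord // nth_ord_enum.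
have csc (l : 'I_m) : nth 0 (map eval cs) l = c l.
  by rewrite -map_comp (nth_map l) ?size_enum_ord // nth_ord_enum /= cdE.
exists (fun t => eval (Sol m n t rows cs)) => [t|l].
  by apply/pure_closureP; eexists.
rewrite -[RHS](solveP solvable); apply: eq_bigr => t _ /=.
by rewrite valK rowsM (funext csc).
Qed.

HB.instance Definition _ := GRing.isSubmodClosed.Build R B pure_closure
  (GRing.submod_closed_semi (pure_closed_submod pure_closure_pure)).

Lemma pure_closure_gen i : nth 0 s i \in pure_closure.
Proof. by apply/pure_closureP; exists (Gen i). Qed.

End PureClosure.

Lemma map_inj_In (X Y : Type) (f : X -> Y) (s s' : seq X) :
  (forall x, List.In x s -> forall y, f x = f y -> x = y) -> map f s = map f s' -> s = s'.
Proof.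
elim: s s' => [|x s IHs] [|y s'] //= fI [fxy fss'].
rewrite (fI x _ y fxy); last by left.
by rewrite (IHs s') // => z zs; apply: fI; right.
Qed.

Section Encoding.
Variables (R T : Type) (pi : T * T -> T) (iota : nat -> T) (rho : R -> T).
Hypotheses (pi_inj : injective pi) (iota_inj : injective iota) (rho_inj : injective rho).

Definition encode_seq (s : seq T) : T :=
  foldr (fun x e => pi (iota 1, pi (x, e))) (pi (iota 0, iota 0)) s.
Arguments encode_seq : simpl never.

Lemma encode_seq_inj : injective encode_seq.
Proof.
elim=> [|x s IHs] [|y s'] //= /pi_inj[].
- by move=> /iota_inj.
- by move=> /iota_inj.
- by move=> /pi_inj[-> /IHs->].
Qed.

Fixpoint encode_term (c : term R) : T :=
  match c with
  | Gen i => encode_seq [:: iota 0; iota i]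
  | Sol m n j rows cs => encode_seq [:: iota 1, iota m, iota n, iota j,
      encode_seq [seq encode_seq (map rho r) | r <- rows] & map encode_term cs]
  end.

Lemma encode_term_inj : injective encode_term.
Proof.
elim/term_ind' => [i|m n j rows cs IH] /= [i'|m' n' j' rows' cs'] /= /encode_seq_inj.
- by case=> /iota_inj->.
- by case=> /iota_inj.
- by case=> /iota_inj.
case=> /iota_inj-> /iota_inj-> /iota_inj-> /encode_seq_inj Erows /(map_inj_In IH)->.
have encI : injective (fun r => encode_seq (map rho r)).
  by move=> r r' /encode_seq_inj/(inj_map rho_inj).
by rewrite (inj_map encI Erows).
Qed.

End Encoding.

Lemma card_le_pure_closure (R : pzRingType) (B : lmodType R) (s : seq B) (T : Type) :
  card_le nat T -> card_le R T -> card_le (T * T) T ->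
  card_le (submod (pure_closure s)) T.
Proof.
move=> [iota iotaI] [rho rhoI] [pi piI].
have /choice[c cE] : forall u : submod (pure_closure s), exists c, eval s c = val u.
  by move=> u; apply/pure_closureP/valP.
exists (fun u => encode_term pi iota rho (c u)) => u v.
by move=> /(encode_term_inj piI iotaI rhoI) Euv; apply: val_inj; rewrite -cE Euv cE.
Qed.

(** * Lifting along pure closures *)

Section LiftingAlongPureClosures.
Variables (R : pzRingType) (A B : lmodType R) (f : {linear A -> B}).
Hypothesis f_lift : forall s : seq B,
  exists l : {linear submod (pure_closure s) -> A}, forall u, f (l u) = val u.

Lemma lift_pure_closures_surj : lsurj f.
Proof.
move=> b; have [l lE] := f_lift [:: b].
have /submodP[u bu] := pure_closure_gen [:: b] 0.
by exists (l u); rewrite lE -bu.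
Qed.

Lemma lift_pure_closures_kernel (K : lmodType R) (k : {linear K -> A}) :
  FP_injective A -> injective k -> (forall a, f a = 0 <-> exists x, a = k x) ->
  FP_injective K.
Proof.
move=> HA kI kK F Ffp E i p iI pS pK; have ipE : short_exact i p by [].
have [k' k'E] := FP_injective_extend k HA Ffp ipE.
have [g gE] : exists g : {linear F -> B}, forall e, g (p e) = f (k' e).
  apply: (linear_factor_surj (h := f \o k')) => // e /pK[x ->] /=.
  by rewrite k'E; apply/kK; exists x.
have [n [m [p0 [g0 [p0S _]]]]] := Ffp.
pose s := [seq g (p0 'e_t) | t <- enum 'I_n].
have gS w : exists u : submod (pure_closure s), g w = val u.
  apply/submodP; have [v <-] := p0S w.
  move: (linear_rowcomb (g \o p0) v) => /= ->; apply: rpred_sum => t _; apply: rpredZ.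
  by have := pure_closure_gen s t; rewrite (nth_map t) ?size_enum_ord // nth_ord_enum.
have [g' g'E] := linear_factor_inj val_inj gS.
have [l lE] := f_lift s.
apply: (linear_retraction (i := i) (j := k) (h := k' \- (l \o g' \o p))) => // [e|x].
  by apply/kK; rewrite /= linearB lE g'E gE subrr.
rewrite /= k'E; have -> : p (i x) = 0 by apply/pK; exists x.
by rewrite !linear0 addr0.
Qed.

End LiftingAlongPureClosures.

Theorem lemma3p3 (R : pzRingType) (kappa : Type)
  (Hcoh : left_coherent R)
  (Hinf : infinite_type kappa) (HRk : card_le R kappa)
  (I : Type) (U : I -> lmodType R)
  (HUfp : forall i, FP_injective (U i))
  (HUcard : forall i, card_le (U i) kappa)
  (HUall : forall A : lmodType R, FP_injective A -> card_le A kappa ->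
             exists i, lmod_iso A (U i))
  (HUrep : forall i j, lmod_iso (U i) (U j) -> i = j)
  (A B : lmodType R) (f : {linear A -> B})
  (HA : FP_injective A) (HB : FP_injective B)
  (Hf : forall (i : I) (g : {linear U i -> B}),
          exists h : {linear U i -> A}, forall u, f (h u) = g u) :
  lsurj f /\
  (forall (K : lmodType R) (k : {linear K -> A}),
     injective k -> (forall a, f a = 0 <-> exists x, a = k x) ->
     FP_injective K).
Proof.
have [iota iota_inj] := Hinf.
have lift s : exists l : {linear submod (pure_closure s) -> A}, forall u, f (l u) = val u.
  have [i [phi phiB]] := HUall _ (FP_injective_pure_submod HB (@pure_closure_pure _ B s))
    (card_le_pure_closure s Hinf HRk (hessenberg iota_inj)).
  have [psi phiK] := linear_bij_inverse phiB.
  have [h hE] := Hf i (val \o psi).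
  by exists (h \o phi) => u; rewrite /= hE /= phiK.
split; first exact: lift_pure_closures_surj.
by move=> K k; apply: lift_pure_closures_kernel.
Qed.
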